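(* For all integers $n\ge k\ge 2$ and $r\ge 0$, \[ \mathsf{opt}_{\operatorname{bandit}}^{\operatorname{adap}}(n,k,r)\ge \frac{(k-1)r}{2}. \]
   Context: Prediction with expert advice: $\mathcal{Y}=\{1,\dots,k\}$, $\mathcal{X}=[k]^n$, experts $h_i(x)=x_i$, $i=1,\dots,n$. $\mathcal{P}_r$ is the set of finite sequences of examples in $\mathcal{X}\times\mathcal{Y}$ on which some $h_i$ errs on at most $r$ examples. Bandit feedback: each round an adaptive adversary chooses $x_t$ from the history, the learner chooses a distribution $\pi^{(t)}$ (from history and $x_t$), the adversary, seeing $\pi^{(t)}$, chooses a distribution $\tau^{(t)}$; $\hat y_t\sim\pi^{(t)}$, $y_t\sim\tau^{(t)}$, and the learner learns only whether $\hat y_t=y_t$. The adversary must ensure that whenever the history is realizable, each $y_t$ in the support of $\tau^{(t)}$ keeps it realizable, where a history of (instance, correct/incorrect, prediction) triples is realizable if some choice of true labels agreeing with the observations yields a sequence in $\mathcal{P}_r$. $\mathsf{opt}_{\operatorname{bandit}}^{\operatorname{adap}}(n,k,r)=\inf_{\text{learner}}\sup_{\text{adversary}}$ expected number of mistakes ($\hat y_t\ne y_t$). *)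

From HB Require Import structures.
From mathcomp Require Import all_boot all_order all_algebra.
From mathcomp Require Import boolp classical_sets reals constructive_ereal ereal.
Set Implicit Arguments. Unset Strict Implicit. Unset Printing Implicit Defensive.
Import Order.TTheory GRing.Theory Num.Theory.
Local Open Scope ring_scope.
Local Open Scope classical_set_scope.

Section BanditGame.
Variables (R : realType) (n k r : nat).

(* Instance space X = [k]^n, label space Y = [k] (as 'I_k = {0,...,k-1}). *)
Definition inst := {ffun 'I_n -> 'I_k}.

(* Expert h_i(x) = x_i. P_r: some expert errs on at most r examples. *)
Definition in_Pr (s : seq (inst * 'I_k)) : Prop :=
  exists i : 'I_n, (count (fun p : inst * 'I_k => p.1 i != p.2) s <= r)%N.

(* Full history of play: triples (x_t, yhat_t, y_t). *)
Definition full_hist := seq (inst * 'I_k * 'I_k).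
Definition obs_hist := seq (inst * bool * 'I_k).

Definition view (h : full_hist) : obs_hist :=
  [seq (p.1.1, p.1.2 == p.2, p.1.2) | p <- h].

Definition realizable (o : obs_hist) : Prop :=
  exists ys : seq 'I_k, size ys = size o /\
    all2 (fun (q : inst * bool * 'I_k) (y : 'I_k) => (q.2 == y) == q.1.2) o ys /\
    in_Pr (zip [seq q.1.1 | q <- o] ys).

Definition is_dist (p : 'I_k -> R) : Prop :=
  (forall a, 0 <= p a) /\ \sum_(a < k) p a = 1.

Definition learner := obs_hist -> inst -> 'I_k -> R.
Definition valid_learner (L : learner) : Prop := forall o x, is_dist (L o x).

Definition adv_inst := full_hist -> inst.
Definition adv_label := full_hist -> inst -> ('I_k -> R) -> 'I_k -> R.

Definition valid_adv (L : learner) (aX : adv_inst) (aT : adv_label) : Prop :=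
  forall h : full_hist,
    let x := aX h in
    let pi := L (view h) x in
    let tau := aT h x pi in
    is_dist tau /\
    (realizable (view h) ->
       forall yh y : 'I_k, 0 < pi yh -> 0 < tau y ->
         realizable (view (rcons h (x, yh, y)))).

Fixpoint exp_mistakes (L : learner) (aX : adv_inst) (aT : adv_label)
    (T : nat) (h : full_hist) : R :=
  match T with
  | 0 => 0
  | T'.+1 =>
      let x := aX h in
      let pi := L (view h) x in
      let tau := aT h x pi in
      \sum_(yh < k) \sum_(y < k)
         pi yh * tau y * ((yh != y)%:R + exp_mistakes L aX aT T' (rcons h (x, yh, y)))
  end.

Definition opt_bandit_adap : \bar R :=
  ereal_inf [set ereal_sup
                 [set e | exists (T : nat) (aX : adv_inst) (aT : adv_label),
                     valid_adv L aX aT /\ e = (exp_mistakes L aX aT T [::])%:E]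
            | L in valid_learner].

End BanditGame.

From HB Require Import structures.
From mathcomp Require Import all_boot all_order all_algebra.
From mathcomp Require Import boolp classical_sets reals constructive_ereal ereal.
From mathcomp Require Import ring lra zify.
Import Order.TTheory GRing.Theory Num.Theory.
Local Open Scope ring_scope.

(* The adversary always shows [cover_inst], whose n >= k coordinates take every
   label, so that expert i acts as the constant label [cover_inst i] and a history
   is realizable iff some label is alive, i.e. contradicted by at most r rounds.
   It answers with the alive label of least learner probability, so the learner
   guesses right with probability at most 1/s, s being the number of alive labels.
   A right guess contradicts at most s - 1 alive labels and a mistake at most one.
   Hence the potential (total remaining lives minus the largest one), which starts
   at (k - 1)(r + 1), costs about half a mistake per unit to bring down; the
   induction E_T >= T g potential over N rounds with N g = r / (2 (r + 1)) gives
   the bound (k - 1) r / 2. *)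

Lemma all2_rcons (S T : Type) (f : S -> T -> bool) s t x y :
  size s = size t -> all2 f (rcons s x) (rcons t y) = all2 f s t && f x y.
Proof.
elim: s t => [|a s IH] [|b t] //= => [_|[/IH ->]]; by rewrite ?andbT ?andbA.
Qed.

Definition point_label {R : realType} {n k : nat}
    (f : full_hist n k -> inst n k -> ('I_k -> R) -> 'I_k) : adv_label R n k :=
  fun h x pi z => (z == f h x pi)%:R.

Section PointAdversary.
Variables (R : realType) (n k : nat).

Lemma is_dist_point (y : 'I_k) : is_dist (fun z => (z == y)%:R : R).
Proof.
split=> [z|]; first exact: ler0n.
by rewrite (bigD1 y) //= eqxx big1 ?addr0 // => z /negbTE ->.
Qed.

Lemma exp_mistakes_point_label (L : learner R n k) aX f T h :
  let x := aX h in let pi := L (view h) x in let y := f h x pi in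
  exp_mistakes L aX (point_label f) T.+1 h =
  \sum_(yh < k) pi yh *
    ((yh != y)%:R + exp_mistakes L aX (point_label f) T (rcons h (x, yh, y))).
Proof.
move=> x pi y /=; apply: eq_bigr => yh _.
rewrite (bigD1 y) //= /point_label eqxx mulr1 big1 ?addr0 // => z /negbTE ->.
by rewrite mulr0 mul0r.
Qed.

End PointAdversary.

Lemma view_rcons n k (h : full_hist n k) x yh y :
  view (rcons h (x, yh, y)) = rcons (view h) (x, yh == y, yh).
Proof. by rewrite /view map_rcons. Qed.

Lemma realizable_rcons_expert {n k r} {o : obs_hist n k} (x : inst n k) :
  realizable r o -> exists y, forall yh, realizable r (rcons o (x, yh == y, yh)).
Proof.
move=> [ys [size_ys [ys_fit [i i_good]]]]; exists (x i) => yh.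
exists (rcons ys (x i)); split; first by rewrite !size_rcons size_ys.
split; first by rewrite all2_rcons ?size_ys // ys_fit /= eqxx.
exists i; rewrite map_rcons zip_rcons ?size_map ?size_ys //.
by rewrite -cats1 count_cat /= eqxx !addn0.
Qed.

Lemma mixture_lower_bound {R : realType} {k : nat} {w : 'I_k -> R} {y : 'I_k}
    {E : 'I_k -> R} {c P m : R} :
  is_dist w -> (forall yh, c * P - c * (if yh == y then m else 1) <= E yh) ->
  c * P + (1 - c) - w y * (1 - c + c * m) <=
    \sum_(yh < k) w yh * ((yh != y)%:R + E yh).
Proof.
move=> [w_ge0 w_sum] E_ge.
have -> : c * P + (1 - c) - w y * (1 - c + c * m) =
    \sum_(yh < k) w yh * (c * P + (1 - c) - (yh == y)%:R * (1 - c + c * m)).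
  rewrite (bigD1 y) //= eqxx mul1r.
  rewrite (eq_bigr (fun yh => w yh * (c * P + (1 - c)))); last first.
    by move=> yh /negbTE ->; rewrite mul0r subr0.
  rewrite -mulr_suml.
  have -> : \sum_(yh < k | yh != y) w yh = 1 - w y.
    by rewrite -w_sum [in RHS](bigD1 y) //= addrAC subrr add0r.
  ring.
apply: ler_sum => yh _; apply: ler_wpM2l => //.
have := E_ge yh; case: eqP => [_|_] /=; lra.
Qed.

Lemma round_gain {R : realType} {c g P p m s : R} :
  0 <= p -> (m + 1) * p <= 1 -> 0 <= c -> 0 <= m -> 0 <= g -> 0 <= s ->
  P <= m * s -> (m + 1) * g * s <= 1 - 2 * c ->
  g * P <= (1 - c) - p * (1 - c + c * m).
Proof.
move=> p_ge0 p_le c_ge0 m_ge0 g_ge0 s_ge0 P_le gs_le.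
have gs_ge0 : 0 <= (m + 1) * g * s by rewrite !mulr_ge0 ?addr_ge0.
have gP_le : (m + 1) * (g * P) <= m * (1 - 2 * c).
  apply: le_trans (_ : (m + 1) * g * (m * s) <= _).
    by rewrite mulrA; apply: ler_wpM2l => //; nra.
  by rewrite mulrCA; apply: ler_wpM2l.
have q_ge0 : 0 <= 1 - c + c * m by nra.
have : (m + 1) * p * (1 - c + c * m) <= 1 * (1 - c + c * m) by apply: ler_wpM2r.
nra.
Qed.

Lemma card_mul_argmin_le (R : realType) k (pi : 'I_k -> R) (A : pred 'I_k) y :
  is_dist pi -> (forall z, A z -> pi y <= pi z) -> #|A|%:R * pi y <= 1.
Proof.
move=> [pi_ge0 pi_sum] min_y.
rewrite -[X in _ <= X]pi_sum -sum1_card natr_sum mulr_suml big_mkcond /=.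
by apply: ler_sum => z _; case: ifP => [/min_y|_]; rewrite ?mul1r.
Qed.

Section CoverAdversary.
Context {R : realType} {n k' r : nat}.
Hypothesis leq_k_n : (k'.+2 <= n)%N.
Local Notation k := k'.+2.
Local Notation round := (inst n k * bool * 'I_k)%type.
Local Notation obs := (obs_hist n k).
Local Notation full := (full_hist n k).

Definition cover_inst : inst n k := [ffun i : 'I_n => inord (minn i k'.+1)].

Lemma cover_instP (c : 'I_k) : exists i : 'I_n, cover_inst i = c.
Proof.
have ci : (c < n)%N by apply: leq_trans leq_k_n.
exists (Ordinal ci); rewrite ffunE /=.
have /minn_idPl -> : (c <= k'.+1)%N by rewrite -ltnS.
exact: inord_val.
Qed.

Definition cover_only (o : obs) : bool := all (fun q : round => q.1.1 == cover_inst) o.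

(* The observed round [q] = (instance, [prediction == label], prediction) rules
   out [c] as its true label. *)
Definition inconsistent (c : 'I_k) (q : round) : bool :=
  if q.1.2 then q.2 != c else q.2 == c.

Definition cost (c : 'I_k) (o : obs) : nat := count (inconsistent c) o.

Definition alive (o : obs) (c : 'I_k) : bool := (cost c o <= r)%N.

Lemma inconsistent_truth x yh y : inconsistent y (x, yh == y, yh) = false.
Proof. by rewrite /inconsistent; case: eqP => [->|/eqP]; rewrite ?eqxx. Qed.

Lemma cost_rcons c o q : cost c (rcons o q) = (cost c o + inconsistent c q)%N.
Proof. by rewrite /cost -cats1 count_cat /= addn0. Qed.

(* True labels explaining the feedback of a history, under which the constant
   predictor [c] errs exactly on the rounds inconsistent with [c]. *)
Definition explain (c : 'I_k) (q : round) : 'I_k :=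
  if q.1.2 then q.2 else if q.2 == c then lift c ord0 else c.

Lemma realizable_of_alive o c : cover_only o -> alive o c -> realizable r o.
Proof.
move=> cover_o alive_c; exists [seq explain c q | q <- o]; split; first exact: size_map.
split.
  elim: o {cover_o alive_c} => [|[[x b] yh] o IH] //=; rewrite IH andbT /explain /=.
  case: b; rewrite /= ?eqxx //; case: (yh =P c) => [->|/eqP/negbTE ne_yh_c].
    by rewrite (negbTE (neq_lift _ _)).
  by rewrite !ne_yh_c.
have [i ci] := cover_instP c; exists i; apply: (leq_trans _ alive_c).
rewrite zip_map count_map.
elim: o cover_o {alive_c} => [|[[x b] yh] o IH] //= /andP[/eqP -> /IH]; apply: leq_add.
rewrite /inconsistent /explain /= ci; case: b; first by rewrite eq_sym.
by case: (yh == c); rewrite ?eqxx ?leq_b1.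
Qed.

Lemma alive_of_realizable {o} : cover_only o -> realizable r o -> exists c, alive o c.
Proof.
move=> cover_o [ys [size_ys [ys_fit [i i_good]]]]; exists (cover_inst i).
apply: leq_trans i_good.
elim: o ys size_ys ys_fit cover_o => [|[[x b] yh] o IH] [|y ys] //= [size_ys].
move=> /andP[y_fit ys_fit] /andP[/eqP -> cover_o]; apply: leq_add; last exact: IH.
rewrite /inconsistent /=; case: b y_fit; rewrite ?eqb_id ?eqbF_neg.
  by move=> /eqP ->; rewrite eq_sym.
by move=> ne_yh_y; case: (yh =P cover_inst i) => // <-; rewrite ne_yh_y.
Qed.

Lemma realizable_rcons_alive o c yh : cover_only o -> alive o c ->
  realizable r (rcons o (cover_inst, yh == c, yh)).
Proof.
move=> cover_o alive_c; apply: (@realizable_of_alive _ c).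
  by rewrite /cover_only all_rcons eqxx.
by rewrite /alive cost_rcons inconsistent_truth addn0.
Qed.

Definition life (o : obs) (c : 'I_k) : nat := (r.+1 - cost c o)%N.
Definition potential (o : obs) : nat :=
  (\sum_(c < k) life o c - \max_(c < k) life o c)%N.
Definition kills (o : obs) (q : round) : nat :=
  (\sum_(c < k) (alive o c && inconsistent c q))%N.

Lemma life_rcons o q c :
  life o c = (life (rcons o q) c + (alive o c && inconsistent c q))%N.
Proof.
by rewrite /life cost_rcons /alive; case: (inconsistent c q); case: leqP => /=; lia.
Qed.

Lemma potential_rcons o q : (potential o <= potential (rcons o q) + kills o q)%N.
Proof.
have sum_life : (\sum_(c < k) life o c = \sum_(c < k) life (rcons o q) c + kills o q)%N.
  by rewrite /kills -big_split; apply: eq_bigr => c _; exact: life_rcons.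
have max_life : (\max_(c < k) life (rcons o q) c <= \max_(c < k) life o c)%N.
  apply/bigmax_leqP => c _; apply: leq_trans (leq_bigmax c).
  by rewrite [leqRHS](life_rcons _ q) leq_addr.
have max_le_sum : (\max_(c < k) life (rcons o q) c <= \sum_(c < k) life (rcons o q) c)%N.
  by apply/bigmax_leqP => c _; rewrite (bigD1 c) //= leq_addr.
rewrite /potential; lia.
Qed.

Lemma potential_le_card_alive {o y} :
  alive o y -> (potential o <= #|alive o|.-1 * r.+1)%N.
Proof.
move=> alive_y; rewrite /potential (bigD1 y) //=.
set others := \sum_(c < k | _) _.
have others_le : (others <= #|alive o|.-1 * r.+1)%N.
  rewrite (cardD1 y) [y \in _]alive_y add1n /= -sum1_card big_distrl /=.
  rewrite /others big_mkcond [X in (_ <= X)%N]big_mkcond /=; apply: leq_sum => c _.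
  rewrite !inE unfold_in mul1n /life; case: (c != y) => //=.
  by case: (leqP (cost c o) r); lia.
have life_le_max : (life o y <= \max_(c < k) life o c)%N by exact: leq_bigmax.
by apply: leq_trans others_le; rewrite leq_subLR leq_add2r.
Qed.

Lemma kills_le o x yh y : alive o y ->
  (kills o (x, yh == y, yh) <= if yh == y then #|alive o|.-1 else 1)%N.
Proof.
move=> alive_y; rewrite /kills /inconsistent /=; case: (yh =P y) => [->|/eqP ne_yh_y].
  rewrite (bigD1 y) //= eqxx andbF add0n (cardD1 y) [y \in _]alive_y /= -sum1_card.
  rewrite big_mkcond [X in (_ <= X)%N]big_mkcond /=; apply: leq_sum => c _.
  rewrite !inE unfold_in /alive; case: (c =P y) => [->|/eqP ne_c_y]; first by rewrite eqxx.
  by rewrite eq_sym ne_c_y andbT; case: (_ <= r)%N.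
rewrite (bigD1 yh) //= big1 ?addn0 => [|c ne_c_yh]; first exact: leq_b1.
by rewrite eq_sym (negbTE ne_c_yh) andbF.
Qed.

(* [valid_adv] constrains the adversary on every history, including those it never
   produces; there any realizability-preserving label will do. *)
Definition answer_spec (h : full) (pi : 'I_k -> R) (y : 'I_k) : Prop :=
  (realizable r (view h) -> forall yh, realizable r (view (rcons h (cover_inst, yh, y)))) /\
  (cover_only (view h) -> realizable r (view h) ->
     alive (view h) y /\ forall z, alive (view h) z -> pi y <= pi z).

Lemma answer_spec_ex h pi : exists y, answer_spec h pi y.
Proof.
case: (pselect (realizable r (view h))) => [real_h|not_real]; last first.
  by exists ord0; split=> [|_] /not_real.
case cover_h: (cover_only (view h)); last first.
  have [y ext_y] := realizable_rcons_expert cover_inst real_h.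
  by exists y; split=> [_ yh|]; rewrite ?view_rcons ?cover_h.
have [c alive_c] := alive_of_realizable cover_h real_h.
have [y alive_y min_y] := Order.TotalTheory.arg_minP pi alive_c.
exists y; split=> [_ yh|_ _]; first by rewrite view_rcons; exact: realizable_rcons_alive.
by split=> // z; exact: min_y.
Qed.

Definition answer (h : full) (pi : 'I_k -> R) : 'I_k :=
  proj1_sig (cid (answer_spec_ex h pi)).

Lemma answerP h pi : answer_spec h pi (answer h pi).
Proof. exact: proj2_sig (cid _). Qed.

Definition cover_adv_inst : adv_inst n k := fun _ => cover_inst.
Definition min_alive_label : adv_label R n k := point_label (fun h _ pi => answer h pi).

Lemma valid_min_alive (L : learner R n k) : valid_adv r L cover_adv_inst min_alive_label.
Proof.
move=> h /=; split; first exact: is_dist_point.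
move=> real_h yh y _; rewrite /min_alive_label /point_label.
by case: eqP => [-> _|_]; [exact: (answerP h _).1 | rewrite ltxx].
Qed.

Lemma potential_nil : potential [::] = (k'.+1 * r.+1)%N.
Proof.
have life_nil c : life [::] c = r.+1 by rewrite /life /cost subn0.
have max_life : (\max_(c < k) life [::] c = r.+1)%N.
  apply/eqP; rewrite eqn_leq; apply/andP; split.
    by apply/bigmax_leqP => c _; rewrite life_nil.
  by rewrite -(life_nil ord0) leq_bigmax.
rewrite /potential max_life (eq_bigr _ (fun c _ => life_nil c)) sum_nat_const card_ord.
by rewrite mulSn addKn.
Qed.

Lemma exp_mistakes_ge_potential (L : learner R n k) {g : R} {N T : nat} {h : full} :
  valid_learner L -> 0 <= g -> g * (k * r.+1 + 2 * N)%:R <= 1 ->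
  (T <= N)%N -> cover_only (view h) -> realizable r (view h) ->
  T%:R * g * (potential (view h))%:R <=
    exp_mistakes L cover_adv_inst min_alive_label T h.
Proof.
move=> valid_L g_ge0 g_small; elim: T h => [|T IH] h le_TN cover_h real_h.
  by rewrite /= !mul0r.
rewrite exp_mistakes_point_label /=.
set o := view h; set pi := L o cover_inst; set y := answer h pi.
have [ext_y /(_ cover_h real_h) [alive_y min_y]] := answerP h pi.
set c := T%:R * g; set P := (potential o)%:R; set m := #|alive o|.-1.
have c_ge0 : 0 <= c by rewrite mulr_ge0.
have next yh : c * P - c * (if yh == y then m%:R else 1) <=
    exp_mistakes L cover_adv_inst min_alive_label T (rcons h (cover_inst, yh, y)).
  apply: le_trans (IH _ (ltnW le_TN) _ (ext_y real_h yh)); last first.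
    by rewrite view_rcons /cover_only all_rcons eqxx.
  rewrite view_rcons -mulrBr ler_wpM2l //.
  have := potential_rcons o (cover_inst, yh == y, yh).
  have := kills_le o cover_inst yh y alive_y.
  by case: (yh == y); rewrite -!(ler_nat R) natrD /P; lra.
apply: le_trans (mixture_lower_bound (valid_L o cover_inst) next).
have [pi_ge0 _] := valid_L o cover_inst.
have card_alive : #|alive o| = m.+1 by rewrite /m prednK //; apply/card_gt0P; exists y.
have p_le : (m%:R + 1) * pi y <= 1.
  by rewrite natr1 -card_alive; apply: card_mul_argmin_le => //; exact: valid_L.
have P_le : P <= m%:R * r.+1%:R by rewrite -natrM ler_nat (potential_le_card_alive alive_y).
have gs_le : (m%:R + 1) * g * r.+1%:R <= 1 - 2 * c.
  have m_lt_k : (m.+1 <= k)%N.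
    by rewrite -card_alive; apply: leq_trans (max_card _) _; rewrite card_ord.
  have c_le : c <= N%:R * g by apply: ler_wpM2r => //; rewrite ler_nat ltnW.
  have : (m%:R + 1) * g * r.+1%:R <= k%:R * g * r.+1%:R.
    by rewrite -mulrA -[X in _ <= X]mulrA ler_wpM2r ?mulr_ge0 // natr1 ler_nat.
  move: g_small; rewrite natrD !natrM; nra.
have := round_gain (pi_ge0 y) p_le c_ge0 (ler0n _ m) g_ge0 (ler0n _ r.+1) P_le gs_le.
rewrite -natr1 mulrDl mul1r -/c; lra.
Qed.

End CoverAdversary.

Theorem lemma4p11 (R : realType) (n k r : nat) :
  (2 <= k)%N -> (k <= n)%N ->
  ((((k - 1) * r)%:R / 2 : R)%:E <= opt_bandit_adap R n k r)%E.
Proof.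
case: k => [|[|k']] // _ leq_k_n.
rewrite /opt_bandit_adap; apply/ereal_infP => _ [L valid_L <-].
(* Then N g = r / (2 (r + 1)), while potential [::] = (k - 1) (r + 1). *)
pose N := (r * (k'.+2 * r.+1))%N.
pose g : R := ((2 * r.+1 * (k'.+2 * r.+1))%:R)^-1.
have g_small : g * (k'.+2 * r.+1 + 2 * N)%:R <= 1.
  rewrite ler_pdivrMl ?ltr0n ?muln_gt0 // mulr1 ler_nat /N; nia.
have real_nil : realizable r (view (n:=n) (k:=k'.+2) [::]).
  exact: (realizable_of_alive leq_k_n [::] ord0).
have g_ge0 : 0 <= g by rewrite invr_ge0.
have := exp_mistakes_ge_potential leq_k_n L (h := [::]) valid_L g_ge0 g_small
  (leqnn N) isT real_nil.
rewrite potential_nil => bound.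
apply: le_trans (ereal_sup_ubound _); last first.
  exists N, cover_adv_inst, (min_alive_label (r := r) leq_k_n).
  by split; first exact: valid_min_alive.
rewrite lee_fin; apply: le_trans bound; rewrite /g /N subSS subn0 !natrM.
rewrite le_eqVlt; apply/orP; left; apply/eqP; field.
by rewrite nat1r -natrD !pnatr_eq0.
Qed.
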